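(* Let the random permutation $\tau$ be uniformly distributed on the alternating group $A_N$, where $N\ge 3$. Then, as $N\to\infty$, $$\Pr[C_\tau\ge t] = O\left(\frac{N}{2^t}\right),$$ with the implied constant independent of $N$ and $t$.
   Context: For a permutation $\pi$ of $\{1,\ldots,N\}$, $C_\pi$ denotes the number of cycles of $\pi$. *)

From mathcomp Require Import all_boot all_order all_algebra all_fingroup all_solvable.
Set Implicit Arguments. Unset Strict Implicit. Unset Printing Implicit Defensive.

(* C_pi : number of cycles of pi (fixed points count as 1-cycles). *)
Definition ncycles (N : nat) (s : 'S_N) : nat := #|porbits s|.

Definition prob_alt_cycles_ge (N t : nat) : rat :=
  (#|[set s in ('Alt_('I_N))%g | (t <= ncycles s)%N]|%:R / #|('Alt_('I_N))%g|%:R)%R.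

From mathcomp Require Import all_boot all_order all_algebra all_fingroup all_solvable.
From mathcomp Require Import zify.
Set Implicit Arguments. Unset Strict Implicit. Unset Printing Implicit Defensive.

(* The cycle-weighted sum W(A) = \sum_{s on A} 2^{C_s} obeys
   2 W(A + a) = (|A| + 2) W(A): split the permutations on A + a according to
   b = s^-1 a, and write s = (a b) j with j on A; the transposition merges
   a (a fixed point of j) into the cycle of b, losing one cycle unless b = a.
   Hence W(T) = (|T| + 1)!, so at most (N + 1)! / 2^t permutations of 'I_N
   have at least t cycles, while |A_N| = N! / 2. *)

Section CycleWeightedSum.
Variable T : finType.

Definition cycle_weight_sum (A : {set T}) : nat :=
  \sum_(s : {perm T} | perm_on A s) 2 ^ #|porbits s|.

Lemma porbit_id (s : {perm T}) x : s x = x -> porbit s x = [set x].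
Proof.
move=> sx; apply/setP => y; rewrite inE; apply/porbitP/eqP.
  by case=> i ->; rewrite permX; elim: i => //= i ->.
by move=> ->; exists 0; rewrite expg0 perm1.
Qed.

Lemma card_porbits1 : #|porbits (1 : {perm T})%g| = #|T|.
Proof.
rewrite /porbits (eq_imset (g := set1)) => [|x]; last by rewrite porbit_id ?perm1.
by rewrite card_imset //; apply: set1_inj.
Qed.

Lemma cycle_weight_sum0 : cycle_weight_sum set0 = 2 ^ #|T|.
Proof.
rewrite /cycle_weight_sum (big_pred1 1%g) ?card_porbits1 // => s /=.
apply/idP/eqP => [s_on | ->]; last exact: perm_on1.
by apply: perm_on_id s_on _; rewrite cards0.
Qed.

Lemma perm_on_setU1_tperm (a b : T) (A : {set T}) (j : {perm T}) :
  a \notin A -> b \in a |: A ->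
  (perm_on (a |: A) (tperm a b * j)%g && (((tperm a b * j)^-1)%g a == b))
    = perm_on A j.
Proof.
move=> aNA bAa; apply/idP/idP => [/andP[s_on /eqP sVa] | j_on].
  have ja : j a = a.
    by have := permKV (tperm a b * j)%g a; rewrite sVa permM tpermR.
  apply/subsetP => x; rewrite inE => jx.
  have xa : x != a by apply: contraNneq jx => ->; rewrite ja.
  have : x \in a |: A.
    apply: contraR jx => xNA; have xNb : x != b by apply: contraNneq xNA => ->.
    by have := out_perm s_on xNA; rewrite permM tpermD 1?eq_sym // => ->.
  by rewrite in_setU1 (negbTE xa).
have ja : j a = a by apply: out_perm j_on aNA.
apply/andP; split; last by apply/eqP/(canLR (permK _)); rewrite permM tpermR ja.
apply: perm_onM; last by apply: subset_trans j_on _; apply: subsetUr.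
apply: subset_trans (tperm_on a b) _.
by apply/subsetP => x; rewrite !inE => /orP[]/eqP->; rewrite ?eqxx // -in_setU1.
Qed.

Lemma exp2_card_porbits_tperm (a b : T) (j : {perm T}) : j a = a ->
  2 ^ #|porbits j| = (if a == b then 1 else 2) * 2 ^ #|porbits (tperm a b * j)%g|.
Proof.
move=> ja; have := porbits_mul_tperm j a b.
case: eqP => [<- _ | /eqP ab]; first by rewrite tperm1 mul1g mul1n.
have -> /= : a \notin porbit j b by rewrite porbit_sym porbit_id // inE eq_sym.
by move=> card_tj; rewrite -expnS; congr (2 ^ _); lia.
Qed.

Lemma cycle_weight_sum_fiber (a b : T) (A : {set T}) :
  a \notin A -> b \in a |: A ->
  \sum_(s : {perm T} | perm_on (a |: A) s && ((s^-1)%g a == b)) 2 ^ #|porbits s|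
    = \sum_(j | perm_on A j) 2 ^ #|porbits (tperm a b * j)%g|.
Proof.
move=> aNA bAa; rewrite (reindex_inj (can_inj (tpermKg a b))) /=.
by apply: eq_bigl => j; rewrite perm_on_setU1_tperm.
Qed.

Lemma cycle_weight_sum_setU1 (a : T) (A : {set T}) : a \notin A ->
  2 * cycle_weight_sum (a |: A) = (#|A| + 2) * cycle_weight_sum A.
Proof.
move=> aNA; rewrite /cycle_weight_sum.
rewrite (partition_big (fun s : {perm T} => (s^-1)%g a) (mem (a |: A))); last first.
  by move=> s s_on; rewrite /= perm_closed ?perm_onV // setU11.
rewrite big_setU1 //= mulnDr cycle_weight_sum_fiber ?setU11 // tperm1.
under [in X in 2 * X + _]eq_bigr do rewrite mul1g.
rewrite mulnDl addnC big_distrr /= -sum_nat_const; congr (_ + _).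
apply: eq_bigr => b bA; rewrite cycle_weight_sum_fiber ?in_setU1 ?bA ?orbT //.
rewrite big_distrr /=; apply: eq_bigr => j j_on.
have aNb : a != b by apply: contraNneq aNA => ->.
by rewrite (exp2_card_porbits_tperm b (out_perm j_on aNA)) (negbTE aNb).
Qed.

Lemma cycle_weight_sumE (A : {set T}) :
  2 ^ #|A| * cycle_weight_sum A = 2 ^ #|T| * #|A|.+1`!.
Proof.
move cardA: #|A| => n; elim: n A cardA => [|n IHn] A cardA.
  by move/eqP: cardA; rewrite cards_eq0 => /eqP ->; rewrite cycle_weight_sum0 mulnC.
have [a aA] : exists a, a \in A by apply/card_gt0P; rewrite cardA.
have cardAa : #|A :\ a| = n by move: cardA; rewrite (cardsD1 a) aA => -[].
rewrite -(setD1K aA) expnS -mulnA mulnCA cycle_weight_sum_setU1 ?setD11 //.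
by rewrite mulnCA IHn // cardAa factS mulnCA addn2.
Qed.

Lemma cycle_weight_sumT : cycle_weight_sum setT = #|T|.+1`!.
Proof.
apply/eqP; rewrite -(@eqn_pmul2l (2 ^ #|T|)) ?expn_gt0 //.
by rewrite -{1}(cardsT T) cycle_weight_sumE cardsT.
Qed.

Lemma card_porbits_ge_bound (t : nat) (S : {set {perm T}}) :
  #|[set s in S | t <= #|porbits s|]| * 2 ^ t <= #|T|.+1`!.
Proof.
rewrite -cycle_weight_sumT -sum_nat_const.
apply: (@leq_trans (\sum_(s in [set s in S | t <= #|porbits s|]) 2 ^ #|porbits s|)).
  by apply: leq_sum => s; rewrite inE => /andP[_]; apply: leq_pexp2l.
rewrite /cycle_weight_sum [X in _ <= X](eq_bigl predT) => [|s]; last first.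
  by apply/subsetP => x; rewrite inE.
by rewrite [X in _ <= X](bigID (mem [set s in S | t <= #|porbits s|])) leq_addr.
Qed.

End CycleWeightedSum.

Import GRing.Theory Num.Theory.
Local Open Scope ring_scope.

Theorem theorem2p2 :
  exists K : rat, forall N t : nat, (3 <= N)%N ->
    prob_alt_cycles_ge N t <= K * N%:R / 2 ^+ t.
Proof.
exists 3%:R => N t N_ge3; rewrite /prob_alt_cycles_ge.
set c := #|_|; set A := #|_|.
have c_bound : (c * 2 ^ t <= N.+1`!)%N.
  by have := card_porbits_ge_bound t ('Alt_('I_N))%g; rewrite card_ord.
have cardA : (2 * A = N`!)%N by rewrite card_Alt card_ord //; apply: leq_trans N_ge3.
have A_gt0 : (0 < A)%N by move: (fact_gt0 N); rewrite -cardA muln_gt0 => /andP[].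
rewrite ler_pdivrMr ?ltr0n // mulrAC ler_pdivlMr ?exprn_gt0 ?ltr0n //.
rewrite -natrX -!natrM ler_nat; apply: leq_trans c_bound _.
rewrite factS -cardA; nia.
Qed.
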